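(* Let $g\in[\mathbb{F}_2,\mathbb{F}_2]$ and let $\alpha=\alpha_g=P_\alpha(x,y)X+Q_\alpha(x,y)Y$ be the corresponding cycle defined below. Let $k,l\ge0$ be integers and suppose $P_\alpha(x,y)=(x-1)^k(y-1)^l h(x,y)$ for a Laurent polynomial $h\in\mathbb{Z}[x^{\pm1},y^{\pm1}]$. If $g$ is a product of two squares in $\mathbb{F}_2$ (i.e. $g=a^2b^2$ with $a,b\in\mathbb{F}_2$), then $h(1,1)$ is even.
   Context: $\mathbb{F}_2$ is the free group on $x,y$. Let $\tilde K$ be the graph with vertex set $\mathbb{Z}^2$ and oriented edges $x^iy^jX$ from $(i,j)$ to $(i+1,j)$ and $x^iy^jY$ from $(i,j)$ to $(i,j+1)$ (the universal abelian cover of the wedge of two circles). A $1$-chain is written $\alpha=P_\alpha(x,y)X+Q_\alpha(x,y)Y$ with $P_\alpha,Q_\alpha$ integer Laurent polynomials (coefficient of $x^iy^j$ in $P_\alpha$ = coefficient of edge $x^iy^jX$, similarly for $Q_\alpha$). For $g\in[\mathbb{F}_2,\mathbb{F}_2]$ written as a word in $x^{\pm1},y^{\pm1}$, the cycle $\alpha_g$ is the $1$-cycle traced by the lattice path from $(0,0)$ in which $x,x^{-1},y,y^{-1}$ move by $(1,0),(-1,0),(0,1),(0,-1)$ along the corresponding edges, each edge counted with sign $+1$ if traversed in its orientation and $-1$ otherwise; it depends only on $g$. *)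

From mathcomp Require Import all_boot all_order all_algebra.
Set Implicit Arguments. Unset Strict Implicit. Unset Printing Implicit Defensive.
Import Order.TTheory GRing.Theory Num.Theory.
Local Open Scope ring_scope.

Inductive gen := Gx | Gy.

(* A letter is a generator together with a flag: false = g, true = g^{-1}. *)
Definition letter := (gen * bool)%type.
Definition word := seq letter.

Definition inv_letter (c : letter) : letter := (c.1, ~~ c.2).
Definition inv_word (w : word) : word := rev (map inv_letter w).

Inductive fg_eq : word -> word -> Prop :=
  | fg_cancel (u v : word) (c : letter) :
      fg_eq (u ++ [:: c; inv_letter c] ++ v) (u ++ v)
  | fg_refl (u : word) : fg_eq u u
  | fg_sym (u v : word) : fg_eq u v -> fg_eq v u
  | fg_trans (u v t : word) : fg_eq u v -> fg_eq v t -> fg_eq u t.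

Definition comm_word (u v : word) : word :=
  inv_word u ++ inv_word v ++ u ++ v.

Definition in_commutator_subgroup (w : word) : Prop :=
  exists ps : seq (word * word),
    fg_eq w (flatten (map (fun p => comm_word p.1 p.2) ps)).

(* Coefficient of the edge x^i y^j X in the cycle traced by the lattice path of
   w starting at (a,b). *)
Fixpoint xchain (w : word) (a b i j : int) : int :=
  match w with
  | [::] => 0
  | (Gx, false) :: t =>
      (if (i == a) && (j == b) then 1 else 0) + xchain t (a + 1) b i j
  | (Gx, true) :: t =>
      (if (i == a - 1) && (j == b) then -1 else 0) + xchain t (a - 1) b i j
  | (Gy, false) :: t => xchain t a (b + 1) i j
  | (Gy, true) :: t => xchain t a (b - 1) i j
  end.

Definition P_alpha (w : word) (i j : int) : int := xchain w 0 0 i j.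

(* Integer Laurent polynomials in x, y, given as a finite formal sum of
   terms ((i,j), c) meaning c x^i y^j. *)
Definition laurent := seq ((int * int) * int).

Definition lcoef (h : laurent) (i j : int) : int :=
  \sum_(t <- h) (if (t.1.1 == i) && (t.1.2 == j) then t.2 else 0).

Definition leval11 (h : laurent) : int := \sum_(t <- h) t.2.

(* Coefficient functions of (x-1) f and (y-1) f. *)
Definition mul_xm1 (f : int -> int -> int) : int -> int -> int :=
  fun i j => f (i - 1) j - f i j.
Definition mul_ym1 (f : int -> int -> int) : int -> int -> int :=
  fun i j => f i (j - 1) - f i j.

Definition coef_factored (k l : nat) (h : laurent) : int -> int -> int :=
  iter k mul_xm1 (iter l mul_ym1 (lcoef h)).

From mathcomp Require Import all_boot all_order all_algebra.
From mathcomp Require Import ring zify.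
Set Implicit Arguments. Unset Strict Implicit. Unset Printing Implicit Defensive.
Import GRing.Theory.
Local Open Scope ring_scope.

(* Write g = a a b b and let (p, q) be the displacement of the lattice path of
   a.  As g has zero exponent sums, b is displaced by (-p, -q), so the cycle of
   g is (1 + t) F with t = x^p y^q and F the cycle of a b.  Expand around
   (1, 1) in powers of x - 1 and y - 1: since t = 1 + O(x - 1, y - 1),
   multiplying by t leaves the Taylor coefficients of lowest order unchanged,
   so (1 + t) F agrees with 2 F up to the first nonzero order.  Since
   P_g = (x - 1)^k (y - 1)^l h vanishes below order k + l, so does F, and
   comparing coefficients of (x - 1)^k (y - 1)^l gives h(1, 1) = 2 c, where c
   is the corresponding coefficient of F. *)

(* binz i a = i (i - 1) ... (i - a + 1) / a!, for i in Z. *)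
Definition binz (i : int) (a : nat) : int :=
  match i with
  | Posz n => ('C(n, a))%:Z
  | Negz n => (-1) ^+ a * ('C(n + a, a))%:Z
  end.

Lemma binz0 i : binz i 0 = 1.
Proof. by case: i => n; rewrite /= ?addn0 bin0 ?mul1r. Qed.

Lemma binzS i a : binz (i + 1) a.+1 = binz i a.+1 + binz i a.
Proof.
case: i => [n|[|n]].
- have -> : n%:Z + 1 = n.+1%:Z by rewrite -addn1 PoszD.
  by rewrite /= binS PoszD.
- have -> : Negz 0 + 1 = 0 by [].
  rewrite /= bin0n add0n !binn exprS /=; ring.
- have -> : Negz n.+1 + 1 = Negz n by rewrite !NegzE; lia.
  rewrite /= addSn addnS binS !PoszD exprS; ring.
Qed.

(* The coefficient of (x - 1)^a (y - 1)^b in the Taylor expansion of L at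
   (1, 1), since x^i = \sum_a binz i a (x - 1)^a for every i in Z. *)
Definition taylor (a b : nat) (L : laurent) : int :=
  \sum_(t <- L) binz t.1.1 a * binz t.1.2 b * t.2.

Lemma taylor_expand a b (L : laurent) (S : seq (int * int)) :
  uniq S -> {subset map fst L <= S} ->
  taylor a b L = \sum_(p <- S) binz p.1 a * binz p.2 b * lcoef L p.1 p.2.
Proof.
move=> uS sLS; rewrite /taylor /lcoef; symmetry.
under eq_bigr => p _ do rewrite mulr_sumr.
rewrite exchange_big /=; apply: eq_big_seq => t tL.
have tS : t.1 \in S by apply: sLS; apply: map_f.
rewrite (bigD1_seq t.1) //= !eqxx big1_seq ?addr0 // => p /andP [pt _].
case: ifP => [/andP [/eqP e1 /eqP e2]|]; last by rewrite mulr0.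
by move: pt; rewrite [p]surjective_pairing -e1 -e2 -surjective_pairing eqxx.
Qed.

Lemma taylor_lcoef a b (L1 L2 : laurent) :
  (forall i j, lcoef L1 i j = lcoef L2 i j) -> taylor a b L1 = taylor a b L2.
Proof.
move=> eqL; set S := undup (map fst (L1 ++ L2)).
have sub1 : {subset map fst L1 <= S}.
  by move=> p pL; rewrite mem_undup map_cat mem_cat pL.
have sub2 : {subset map fst L2 <= S}.
  by move=> p pL; rewrite mem_undup map_cat mem_cat pL orbT.
rewrite (taylor_expand _ _ (undup_uniq _) sub1).
rewrite (taylor_expand _ _ (undup_uniq _) sub2).
by apply: eq_bigr => p _; rewrite eqL.
Qed.

Lemma taylor00 L : taylor 0 0 L = leval11 L.
Proof. by apply: eq_bigr => t _; rewrite !binz0 !mul1r. Qed.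

Lemma taylor_cat a b L1 L2 : taylor a b (L1 ++ L2) = taylor a b L1 + taylor a b L2.
Proof. exact: big_cat. Qed.

Definition lshift (p q : int) (L : laurent) : laurent :=
  [seq ((t.1.1 + p, t.1.2 + q), t.2) | t <- L].
Definition lopp (L : laurent) : laurent := [seq (t.1, - t.2) | t <- L].
Definition lmul_xm1 (L : laurent) : laurent := lshift 1 0 L ++ lopp L.
Definition lmul_ym1 (L : laurent) : laurent := lshift 0 1 L ++ lopp L.

Lemma lshift0 L : lshift 0 0 L = L.
Proof.
by rewrite /lshift -[RHS]map_id; apply: eq_map => -[[i j] c] /=; rewrite !addr0.
Qed.

Lemma lshiftD p q p' q' L :
  lshift p q (lshift p' q' L) = lshift (p' + p) (q' + q) L.
Proof. by rewrite /lshift -map_comp; apply: eq_map => t /=; rewrite !addrA. Qed.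

Lemma lshift_cat p q L1 L2 : lshift p q (L1 ++ L2) = lshift p q L1 ++ lshift p q L2.
Proof. exact: map_cat. Qed.

Lemma lcoef_cat L1 L2 i j : lcoef (L1 ++ L2) i j = lcoef L1 i j + lcoef L2 i j.
Proof. exact: big_cat. Qed.

Lemma lcoef_cons t L i j :
  lcoef (t :: L) i j = (if (t.1.1 == i) && (t.1.2 == j) then t.2 else 0) + lcoef L i j.
Proof. exact: big_cons. Qed.

Lemma lcoef_lshift p q L i j : lcoef (lshift p q L) i j = lcoef L (i - p) (j - q).
Proof.
rewrite /lcoef big_map; apply: eq_bigr => t _ /=.
by rewrite [t.1.1 == _]eq_sym [t.1.2 == _]eq_sym !subr_eq [i == _]eq_sym [j == _]eq_sym.
Qed.

Lemma lcoef_lopp L i j : lcoef (lopp L) i j = - lcoef L i j.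
Proof.
by rewrite /lcoef big_map -sumrN; apply: eq_bigr => t _ /=; case: ifP; rewrite ?oppr0.
Qed.

Lemma lcoef_factored k l h i j :
  lcoef (iter k lmul_xm1 (iter l lmul_ym1 h)) i j = coef_factored k l h i j.
Proof.
rewrite /coef_factored; elim: k i j => [|k IHk] i j /=.
  elim: l i j => [|l IHl] i j //=.
  by rewrite lcoef_cat lcoef_lopp lcoef_lshift subr0 /mul_ym1 !IHl.
by rewrite lcoef_cat lcoef_lopp lcoef_lshift subr0 /mul_xm1 !IHk.
Qed.

Lemma taylor_lopp a b L : taylor a b (lopp L) = - taylor a b L.
Proof. by rewrite /taylor big_map -sumrN; apply: eq_bigr => t _; rewrite mulrN. Qed.

Lemma taylor_lshiftx a b L :
  taylor a b (lshift 1 0 L) = taylor a b L + (if a is a'.+1 then taylor a' b L else 0).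
Proof.
rewrite /taylor big_map; case: a => [|a]; rewrite ?addr0 -?big_split;
  by apply: eq_bigr => t _ /=; rewrite addr0 ?binz0 ?binzS; ring.
Qed.

Lemma taylor_lshifty a b L :
  taylor a b (lshift 0 1 L) = taylor a b L + (if b is b'.+1 then taylor a b' L else 0).
Proof.
rewrite /taylor big_map; case: b => [|b]; rewrite ?addr0 -?big_split;
  by apply: eq_bigr => t _ /=; rewrite addr0 ?binz0 ?binzS; ring.
Qed.

Lemma taylor_lmul_xm1 a b L :
  taylor a b (lmul_xm1 L) = if a is a'.+1 then taylor a' b L else 0.
Proof. by rewrite taylor_cat taylor_lopp taylor_lshiftx addrAC subrr add0r. Qed.

Lemma taylor_lmul_ym1 a b L :
  taylor a b (lmul_ym1 L) = if b is b'.+1 then taylor a b' L else 0.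
Proof. by rewrite taylor_cat taylor_lopp taylor_lshifty addrAC subrr add0r. Qed.

Definition vanishes_to_order (n : nat) (L : laurent) :=
  forall a b, (a + b < n)%N -> taylor a b L = 0.

Lemma vanishes_to_order_le m n L :
  (m <= n)%N -> vanishes_to_order n L -> vanishes_to_order m L.
Proof. by move=> mn vL a b abm; apply: vL; apply: leq_trans mn. Qed.

Lemma vanishes_lmul_xm1 n L :
  vanishes_to_order n L -> vanishes_to_order n.+1 (lmul_xm1 L).
Proof. by move=> vL [|a] b ab; rewrite taylor_lmul_xm1 //; apply: vL; lia. Qed.

Lemma vanishes_lmul_ym1 n L :
  vanishes_to_order n L -> vanishes_to_order n.+1 (lmul_ym1 L).
Proof. by move=> vL a [|b] ab; rewrite taylor_lmul_ym1 //; apply: vL; lia. Qed.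

Lemma vanishes_factored k l h :
  vanishes_to_order (k + l) (iter k lmul_xm1 (iter l lmul_ym1 h)).
Proof.
elim: k => [|k IHk]; last exact: vanishes_lmul_xm1.
elim: l => [|l IHl] //; exact: vanishes_lmul_ym1.
Qed.

Lemma taylor_factored k l h :
  taylor k l (iter k lmul_xm1 (iter l lmul_ym1 h)) = leval11 h.
Proof.
elim: k => [|k IHk] /=; last by rewrite taylor_lmul_xm1.
by elim: l => [|l IHl] /=; rewrite ?taylor00 ?taylor_lmul_ym1.
Qed.

Definition leading_taylor_stable (p q : int) :=
  forall n L a b, vanishes_to_order n L -> (a + b <= n)%N ->
  taylor a b (lshift p q L) = taylor a b L.

Lemma leading_taylor_stable10 : leading_taylor_stable 1 0.
Proof.
by move=> n L [|a] b vL ab; rewrite taylor_lshiftx ?(vL a b) ?addr0 //; lia.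
Qed.

Lemma leading_taylor_stable01 : leading_taylor_stable 0 1.
Proof.
by move=> n L a [|b] vL ab; rewrite taylor_lshifty ?(vL a b) ?addr0 //; lia.
Qed.

Lemma leading_taylor_stableD p q p' q' :
  leading_taylor_stable p q -> leading_taylor_stable p' q' ->
  leading_taylor_stable (p' + p) (q' + q).
Proof.
move=> st st' n L a b vL ab; rewrite -lshiftD (st n) ?(st' n) //.
by move=> a' b' abn; rewrite (st' n) ?vL //; apply: ltnW.
Qed.

Lemma leading_taylor_stableN p q :
  leading_taylor_stable p q -> leading_taylor_stable (- p) (- q).
Proof.
move=> st n L a b vL ab; set L' := lshift (- p) (- q) L.
have L'K : lshift p q L' = L by rewrite lshiftD !addNr lshift0.
have vL' m : (m <= n)%N -> vanishes_to_order m L'.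
  elim: m => [|m IHm] mn a' b' abm //.
  by rewrite -(st m _ _ _ (IHm (ltnW mn))) // L'K vL //; lia.
by rewrite -(st n L' a b (vL' n (leqnn n)) ab) L'K.
Qed.

Lemma leading_taylor_stableM p q :
  leading_taylor_stable p q -> forall m : int, leading_taylor_stable (m * p) (m * q).
Proof.
move=> st; elim/int_rect => [|m IHm|m IHm].
- by rewrite !mul0r => n L a b _ _; rewrite lshift0.
- by rewrite -addn1 PoszD !mulrDl !mul1r; apply: leading_taylor_stableD.
- rewrite -addn1 PoszD opprD !mulrDl !mulN1r.
  exact: leading_taylor_stableD (leading_taylor_stableN st) IHm.
Qed.

Lemma leading_taylor_stable_all p q : leading_taylor_stable p q.
Proof.
have := leading_taylor_stableD (leading_taylor_stableM leading_taylor_stable10 p)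
  (leading_taylor_stableM leading_taylor_stable01 q).
by rewrite !mulr1 !mulr0 addr0 add0r.
Qed.

Lemma taylor_add_lshift p q n F a b :
  vanishes_to_order n F -> (a + b <= n)%N ->
  taylor a b (F ++ lshift p q F) = 2 * taylor a b F.
Proof.
by move=> vF ab; rewrite taylor_cat (leading_taylor_stable_all p q vF ab); ring.
Qed.

Lemma vanishes_add_lshift p q n F :
  vanishes_to_order n (F ++ lshift p q F) -> vanishes_to_order n F.
Proof.
elim: n => [|n IHn] vG a b abn //.
have vF := IHn (vanishes_to_order_le (leqnSn n) vG).
by move: (vG a b abn); rewrite (taylor_add_lshift p q vF abn); lia.
Qed.

Lemma factored_leval11_even k l h p q F :
  (forall a b, taylor a b (iter k lmul_xm1 (iter l lmul_ym1 h)) =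
               taylor a b (F ++ lshift p q F)) ->
  (2 %| leval11 h)%Z.
Proof.
move=> eqT.
have vG : vanishes_to_order (k + l) (F ++ lshift p q F).
  by move=> a b ab; rewrite -eqT vanishes_factored.
rewrite -(taylor_factored k l) eqT (taylor_add_lshift p q (vanishes_add_lshift vG)) //.
by rewrite dvdz_mulr.
Qed.

Definition xstep (c : letter) : int :=
  if c.1 is Gx then (if c.2 then -1 else 1) else 0.
Definition ystep (c : letter) : int :=
  if c.1 is Gy then (if c.2 then -1 else 1) else 0.

Lemma xstep_inv c : xstep (inv_letter c) = - xstep c.
Proof. by case: c => [[] []]; rewrite /= ?oppr0 ?opprK. Qed.

Lemma ystep_inv c : ystep (inv_letter c) = - ystep c.
Proof. by case: c => [[] []]; rewrite /= ?oppr0 ?opprK. Qed.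

Definition xdisp (w : word) : int := \sum_(c <- w) xstep c.
Definition ydisp (w : word) : int := \sum_(c <- w) ystep c.

Lemma xdisp_cons c w : xdisp (c :: w) = xstep c + xdisp w.
Proof. exact: big_cons. Qed.

Lemma ydisp_cons c w : ydisp (c :: w) = ystep c + ydisp w.
Proof. exact: big_cons. Qed.

Lemma sum_fg_eq (f : letter -> int) (u v : word) :
  (forall c, f (inv_letter c) = - f c) -> fg_eq u v ->
  \sum_(c <- u) f c = \sum_(c <- v) f c.
Proof.
move=> fN; elim=> {u v} [u v c|u|u v _ ->|u v t _ -> _ ->] //.
by rewrite !big_cat !big_cons big_nil fN /= addr0 subrr add0r.
Qed.

Lemma sum_inv_word (f : letter -> int) (w : word) :
  (forall c, f (inv_letter c) = - f c) ->
  \sum_(c <- inv_word w) f c = - \sum_(c <- w) f c.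
Proof. by move=> fN; rewrite big_rev big_map -sumrN; apply: eq_bigr => c _. Qed.

Lemma sum_commutator (f : letter -> int) (g : word) :
  (forall c, f (inv_letter c) = - f c) -> in_commutator_subgroup g ->
  \sum_(c <- g) f c = 0.
Proof.
move=> fN [ps /(sum_fg_eq fN) ->]; rewrite big_flatten big_map big1 // => -[u v] _.
by rewrite !big_cat !(sum_inv_word _ fN) /=; ring.
Qed.

Fixpoint xchainL (w : word) (a b : int) : laurent :=
  match w with
  | [::] => [::]
  | (Gx, false) :: t => ((a, b), 1) :: xchainL t (a + 1) b
  | (Gx, true) :: t => ((a - 1, b), -1) :: xchainL t (a - 1) b
  | (Gy, false) :: t => xchainL t a (b + 1)
  | (Gy, true) :: t => xchainL t a (b - 1)
  end.

Lemma lcoef_xchainL w a b i j : lcoef (xchainL w a b) i j = xchain w a b i j.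
Proof.
elim: w a b => [|[[] []] t IH] a b /=; rewrite ?lcoef_cons ?IH //=.
- by rewrite /lcoef big_nil.
- by rewrite [a - 1 == i]eq_sym [b == j]eq_sym.
- by rewrite [a == i]eq_sym [b == j]eq_sym.
Qed.

Lemma xchainL_cat u v a b :
  xchainL (u ++ v) a b = xchainL u a b ++ xchainL v (a + xdisp u) (b + ydisp u).
Proof.
elim: u a b => [|[[] []] t IH] a b /=; first by rewrite /xdisp /ydisp !big_nil !addr0.
all: by rewrite IH !xdisp_cons !ydisp_cons /= ?add0r ?addrA.
Qed.

Lemma xchainL_lshift w a b p q :
  xchainL w (a + p) (b + q) = lshift p q (xchainL w a b).
Proof. by elim: w a b => [|[[] []] t IH] a b //=; rewrite -IH addrAC. Qed.

Lemma xchainL_cancel c a b i j : lcoef (xchainL [:: c; inv_letter c] a b) i j = 0.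
Proof.
rewrite lcoef_xchainL; case: c => [[] []] //=; rewrite ?addr0 ?subrK ?addrK;
  by case: ifP; rewrite ?addrN.
Qed.

Lemma lcoef_xchainL_fg_eq u v a b i j :
  fg_eq u v -> lcoef (xchainL u a b) i j = lcoef (xchainL v a b) i j.
Proof.
move=> uv; elim: uv a b => {u v} [u v c|u|u v _ IH|u v t _ IH1 _ IH2] a b //.
- have fg_c : fg_eq [:: c; inv_letter c] [::] by apply: (fg_cancel [::] [::]).
  rewrite !xchainL_cat !lcoef_cat xchainL_cancel add0r.
  by rewrite /xdisp /ydisp !(sum_fg_eq _ fg_c) ?big_nil ?addr0 // => d;
    rewrite (xstep_inv, ystep_inv).
- by rewrite IH1 IH2.
Qed.

Lemma sum_sq_sq_commutator (f : letter -> int) (g a b : word) :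
  (forall c, f (inv_letter c) = - f c) -> in_commutator_subgroup g ->
  fg_eq g (a ++ a ++ b ++ b) -> \sum_(c <- b) f c = - \sum_(c <- a) f c.
Proof.
move=> fN /(sum_commutator fN) g0 /(sum_fg_eq fN).
rewrite g0 !big_cat /=; set sa := \sum_(c <- a) f c; set sb := \sum_(c <- b) f c.
by lia.
Qed.

Lemma taylor_xchainL_sq_sq a b n m :
  xdisp b = - xdisp a -> ydisp b = - ydisp a ->
  taylor n m (xchainL (a ++ a ++ b ++ b) 0 0) =
  taylor n m (xchainL (a ++ b) 0 0 ++ lshift (xdisp a) (ydisp a) (xchainL (a ++ b) 0 0)).
Proof.
move=> xb yb; rewrite !xchainL_cat lshift_cat -!xchainL_lshift !add0r xb yb !addrK.
by rewrite !taylor_cat; ring.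
Qed.

Theorem proposition5p1 (g : word) (k l : nat) (h : laurent) :
  in_commutator_subgroup g ->
  (forall i j : int, P_alpha g i j = coef_factored k l h i j) ->
  (exists a b : word, fg_eq g (a ++ a ++ b ++ b)) ->
  (2 %| leval11 h)%Z.
Proof.
move=> g_comm g_coef [a [b g_sq_sq]].
have xb := sum_sq_sq_commutator xstep_inv g_comm g_sq_sq.
have yb := sum_sq_sq_commutator ystep_inv g_comm g_sq_sq.
apply: (@factored_leval11_even k l h (xdisp a) (ydisp a) (xchainL (a ++ b) 0 0)) => n m.
rewrite -taylor_xchainL_sq_sq //; apply: taylor_lcoef => i j.
rewrite lcoef_factored -g_coef /P_alpha -lcoef_xchainL.
exact: lcoef_xchainL_fg_eq g_sq_sq.
Qed.
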